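(* Let $U_0=\mathrm{Spec}\,A_0$ be a reduced noetherian affine scheme and $Z\subset U_0$ a closed subset defined by an ideal $I_0\subset A_0$, such that $Z$ contains no generic point of $U_0$ and meets every irreducible component of $U_0$. Let $A$ be the $I_0$-adic completion of $A_0$, so that $A_0\to A$ is injective and flat and induces an injection $K(A_0)\to K(A)$ of total rings of fractions. Then $A_0=A\cap H^0(U_0\setminus Z,\mathcal O_{U_0})$, the intersection taken inside $K(A)$ (with $H^0(U_0\setminus Z,\mathcal O_{U_0})$ viewed inside $K(A_0)\subset K(A)$).
   Context: For a ring $B$, $K(B)=S^{-1}B$ with $S$ the set of non-zero-divisors of $B$ (total ring of fractions). *)

From HB Require Import structures.
From mathcomp Require Import all_boot all_order all_algebra.
Set Implicit Arguments. Unset Strict Implicit. Unset Printing Implicit Defensive.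
Import GRing.Theory.
Local Open Scope ring_scope.

Section CommAlg.
Variable R : comNzRingType.

Definition is_ideal (I : R -> Prop) : Prop :=
  [/\ I 0, (forall x y, I x -> I y -> I (x + y)) & (forall r x, I x -> I (r * x))].

Definition subideal (I J : R -> Prop) : Prop := forall x, I x -> J x.

Definition is_prime (P : R -> Prop) : Prop :=
  [/\ is_ideal P, ~ P 1 & (forall x y, P (x * y) -> P x \/ P y)].

(* generic points of Spec R = minimal primes *)
Definition is_minimal_prime (P : R -> Prop) : Prop :=
  is_prime P /\ (forall Q, is_prime Q -> subideal Q P -> subideal P Q).

Definition noetherian : Prop :=
  forall J : R -> Prop, is_ideal J ->
  exists s : seq R, forall x,
    J x <-> exists r : 'I_(size s) -> R, x = \sum_(i < size s) r i * s`_i.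

Definition reduced : Prop := forall (x : R) (n : nat), x ^+ n = 0 -> x = 0.

Definition nzd (s : R) : Prop := forall x, s * x = 0 -> x = 0.

Inductive ipow (I : R -> Prop) : nat -> R -> Prop :=
| ipow0 x : ipow I 0 x
| ipowS n i j : I i -> ipow I n j -> ipow I n.+1 (i * j)
| ipowD n x y : ipow I n.+1 x -> ipow I n.+1 y -> ipow I n.+1 (x + y).

(* ---- The I-adic completion  A = lim_n R / I^n ----
   An element of A is represented by a sequence a : nat -> R with
   a (n+1) = a n mod I^n (a compatible system of residues a n mod I^n);
   two representatives are equal in A iff they agree mod I^n for all n. *)
Definition Aelt (I : R -> Prop) (a : nat -> R) : Prop :=
  forall n, ipow I n (a n.+1 - a n).
Definition Aeq (I : R -> Prop) (a b : nat -> R) : Prop :=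
  forall n, ipow I n (a n - b n).
Definition Aconst (c : R) : nat -> R := fun _ => c.
Definition Aadd (a b : nat -> R) : nat -> R := fun n => a n + b n.
Definition Aopp (a : nat -> R) : nat -> R := fun n => - a n.
Definition Amul (a b : nat -> R) : nat -> R := fun n => a n * b n.

Definition Anzd (I : R -> Prop) (u : nat -> R) : Prop :=
  Aelt I u /\ forall v, Aelt I v -> Aeq I (Amul u v) (Aconst 0) -> Aeq I v (Aconst 0).

(* ---- total ring of fractions K(A): pairs (a, u), u a non-zero-divisor of A;
   (a,u) = (a',u') iff w (a u' - a' u) = 0 for some non-zero-divisor w ---- *)
Definition KAeq (I : R -> Prop) (x y : (nat -> R) * (nat -> R)) : Prop :=
  exists w, Anzd I w /\
    Aeq I (Amul w (Aadd (Amul x.1 y.2) (Aopp (Amul y.1 x.2)))) (Aconst 0).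

Definition KA_of_KR (b s : R) : (nat -> R) * (nat -> R) := (Aconst b, Aconst s).

Definition KReq (x y : R * R) : Prop :=
  exists v, nzd v /\ v * (x.1 * y.2 - y.1 * x.2) = 0.

(* H^0(Spec R \ V(I), O) viewed inside K(R): the fraction b/s is a section over
   U = Spec R \ V(I) iff it is regular at every point of U, i.e. for every prime
   p not containing I there are g not in p and c in R with g * (b/s) = c/1. *)
Definition H0_sections (I : R -> Prop) (b s : R) : Prop :=
  nzd s /\
  forall p, is_prime p -> ~ subideal I p ->
    exists g c, ~ p g /\ KReq (g * b, s) (c, 1).

End CommAlg.

(* Let a/u lie in the intersection: a/u = a' with a' in A, and a/u = b/s with b/s
   regular outside V(I0).  Regularity says that the conductor {x | x b in s A0} lies in
   no prime outside V(I0); by prime avoidance and noetherianity it contains a power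
   I0^M.  Since a' s = b in A, b lies in every I0^n + s A0, and the Artin-Rees lemma
   for the pair s A0 and (s, b), combined with I0^M b in s A0, gives b = s c in A0.
   Finally a' s = c s in A, and because s is a non-zero-divisor of A0, Artin-Rees
   again yields a' = c in A. *)

From HB Require Import structures.
From mathcomp Require Import all_boot all_order all_algebra.
From mathcomp Require Import ring.
From Stdlib Require Import Classical ClassicalEpsilon.
Set Implicit Arguments. Unset Strict Implicit. Unset Printing Implicit Defensive.
Import GRing.Theory.
Local Open Scope ring_scope.

Section Ideals.
Variable R : comNzRingType.
Implicit Types (I J L N : R -> Prop) (s : seq R) (t x y r : R).

Lemma ideal0 I : is_ideal I -> I 0. Proof. by case. Qed.

Lemma idealD I x y : is_ideal I -> I x -> I y -> I (x + y).
Proof. by case=> _ H _; apply: H. Qed.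

Lemma idealMl I r x : is_ideal I -> I x -> I (r * x).
Proof. by case=> _ _ H; apply: H. Qed.

Lemma idealMr I r x : is_ideal I -> I x -> I (x * r).
Proof. by move=> HI Hx; rewrite mulrC; apply: idealMl. Qed.

Lemma idealN I x : is_ideal I -> I x -> I (- x).
Proof. by move=> HI Hx; rewrite -mulN1r; apply: idealMl. Qed.

Lemma idealB I x y : is_ideal I -> I x -> I y -> I (x - y).
Proof. by move=> HI Hx Hy; apply: idealD => //; apply: idealN. Qed.

Definition principal t x := exists z, x = t * z.

Definition isum I J x := exists i j, I i /\ J j /\ x = i + j.

Definition conductor t b x := principal t (x * b).

Lemma principal_ideal t : is_ideal (principal t).
Proof.
split; first by exists 0; rewrite mulr0.
- by move=> x y [z1 ->] [z2 ->]; exists (z1 + z2); rewrite mulrDr.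
- by move=> r x [z ->]; exists (r * z); rewrite mulrCA.
Qed.

Lemma principal_id t : principal t t.
Proof. by exists 1; rewrite mulr1. Qed.

Lemma conductor_ideal t b : is_ideal (conductor t b).
Proof.
split; first by exists 0; rewrite mul0r mulr0.
- by move=> x y [z1 E1] [z2 E2]; exists (z1 + z2); rewrite mulrDl E1 E2 mulrDr.
- by move=> r x [z E]; exists (r * z); rewrite -mulrA E mulrCA.
Qed.

Lemma isum_ideal I J : is_ideal I -> is_ideal J -> is_ideal (isum I J).
Proof.
move=> HI HJ; split.
- by exists 0, 0; rewrite addr0; split; [exact: ideal0 | split; [exact: ideal0|]].
- move=> _ _ [i1 [j1 [Hi1 [Hj1 ->]]]] [i2 [j2 [Hi2 [Hj2 ->]]]].
  exists (i1 + i2), (j1 + j2); do ![split; first exact: idealD]; ring.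
- move=> r _ [i [j [Hi [Hj ->]]]]; exists (r * i), (r * j).
  by do ![split; first exact: idealMl]; rewrite mulrDr.
Qed.

Lemma isuml I J x : is_ideal J -> I x -> isum I J x.
Proof. by move=> HJ Hx; exists x, 0; do !split => //; [exact: ideal0 | rewrite addr0]. Qed.

Lemma isumr I J x : is_ideal I -> J x -> isum I J x.
Proof. by move=> HI Hx; exists 0, x; do !split => //; [exact: ideal0 | rewrite add0r]. Qed.

Lemma ipow_zero I n : is_ideal I -> ipow I n 0.
Proof.
move=> HI; elim: n => [|n IH]; first exact: ipow0.
by rewrite -(mulr0 (0 : R)); apply: ipowS IH; exact: ideal0.
Qed.

Lemma ipow_add I n x y : ipow I n x -> ipow I n y -> ipow I n (x + y).
Proof. by case: n => [|n] Hx Hy; [exact: ipow0 | exact: ipowD]. Qed.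

Lemma ipow_mull I n r x : is_ideal I -> ipow I n x -> ipow I n (r * x).
Proof.
move=> HI; elim=> {n x} [x|n i j Hi Hj _|n x y _ IHx _ IHy].
- exact: ipow0.
- by rewrite mulrA; apply: ipowS => //; apply: idealMl.
- by rewrite mulrDr; apply: ipowD.
Qed.

Lemma ipow_ideal I n : is_ideal I -> is_ideal (ipow I n).
Proof.
by move=> HI; split; [exact: ipow_zero | move=> *; exact: ipow_add | move=> *; exact: ipow_mull].
Qed.

Lemma ipow_sub I n x y : is_ideal I -> ipow I n x -> ipow I n y -> ipow I n (x - y).
Proof. by move=> HI; apply: idealB (ipow_ideal n HI). Qed.

Lemma ipowSn I n x : is_ideal I -> ipow I n.+1 x -> ipow I n x.
Proof.
move=> HI H; have [m Em] : exists m, m = n.+1 by exists n.+1.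
rewrite -Em in H; elim: H n Em => {m x} [x|m i j Hi Hj _|m x y _ IHx _ IHy] n // [<-].
- by apply: ipow_mull.
- by apply: ipow_add; [apply: IHx | apply: IHy].
Qed.

Lemma ipow_leq I m n x : is_ideal I -> (m <= n)%N -> ipow I n x -> ipow I m x.
Proof.
move=> HI /subnK <-; elim: (n - m)%N => [//|k IH] H.
by apply: IH; apply: ipowSn; rewrite // addSn.
Qed.

Lemma sub_ipow I J n x : subideal I J -> ipow I n x -> ipow J n x.
Proof.
move=> HIJ; elim=> {n x} [x|n i j Hi _ IH|n x y _ IHx _ IHy].
- exact: ipow0.
- by apply: ipowS => //; apply: HIJ.
- exact: ipowD.
Qed.

Lemma ipow1 I x : is_ideal I -> ipow I 1 x -> I x.
Proof.
move=> HI H; have [m Em] : exists m, m = 1%N by exists 1%N.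
rewrite -Em in H; elim: H Em => {m x} [x|m i j Hi Hj _|m x y _ IHx _ IHy] // [E].
- by apply: idealMr.
- by subst m; apply: idealD => //; [apply: IHx | apply: IHy].
Qed.

Lemma ipow_exprn I n t : is_ideal I -> I t -> ipow I n (t ^+ n).
Proof.
move=> HI Ht; elim: n => [|n IH]; first exact: ipow0.
by rewrite exprS; apply: ipowS.
Qed.

Inductive imul I J : R -> Prop :=
| imul0 : imul I J 0
| imulM i j : I i -> J j -> imul I J (i * j)
| imulD x y : imul I J x -> imul I J y -> imul I J (x + y).

Lemma imul_sub I J L x : is_ideal L ->
  (forall i j, I i -> J j -> L (i * j)) -> imul I J x -> L x.
Proof.
move=> HL H; elim=> [|i j Hi Hj|y z _ Hy _ Hz]; [exact: ideal0 | exact: H | exact: idealD].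
Qed.

Lemma sub_imul I I' J x : subideal I I' -> imul I J x -> imul I' J x.
Proof.
move=> HI; elim=> [|i j Hi Hj|y z _ Hy _ Hz]; [exact: imul0 | exact/imulM/Hj/HI | exact: imulD].
Qed.

Fixpoint span s x : Prop :=
  if s is t :: s' then exists r y, span s' y /\ x = t * r + y else x = 0.

Lemma span_ideal s : is_ideal (span s).
Proof.
elim: s => [|t s IH] /=.
  by split => //; [move=> x y -> ->; rewrite addr0 | move=> r x ->; rewrite mulr0].
split.
- by exists 0, 0; rewrite mulr0 addr0; split => //; exact: ideal0.
- move=> _ _ [r1 [y1 [H1 ->]]] [r2 [y2 [H2 ->]]].
  by exists (r1 + r2), (y1 + y2); split; [exact: idealD | ring].
- move=> r _ [r1 [y1 [H1 ->]]].
  by exists (r * r1), (r * y1); split; [exact: idealMl | ring].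
Qed.

Lemma span_mem s t : t \in s -> span s t.
Proof.
elim: s => [//|t' s IH] /=; rewrite inE => /orP [/eqP ->|Ht].
  by exists 1, 0; split; [exact: ideal0 (span_ideal s) | rewrite mulr1 addr0].
by exists 0, t; split; [exact: IH | rewrite mulr0 add0r].
Qed.

Lemma span_cons t s x : span s x -> span (t :: s) x.
Proof. by move=> H; exists 0, x; rewrite mulr0 add0r. Qed.

Lemma span_sub s J : is_ideal J -> (forall t, t \in s -> J t) -> subideal (span s) J.
Proof.
move=> HJ; elim: s => [|t s IH] Hs x /=; first by move=> ->; exact: ideal0.
move=> [r [y [Hy ->]]]; apply: idealD => //.
  by apply: idealMr => //; apply: Hs; rewrite inE eqxx.
by apply: IH => // t' Ht'; apply: Hs; rewrite inE Ht' orbT.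
Qed.

Lemma span_sumP s x :
  (exists r : 'I_(size s) -> R, x = \sum_(i < size s) r i * s`_i) <-> span s x.
Proof.
elim: s x => [|t s IH] x /=.
  split; first by move=> [r ->]; rewrite big_ord0.
  by move=> ->; exists (fun _ => 0); rewrite big_ord0.
split.
- move=> [r ->]; rewrite big_ord_recl /=.
  exists (r ord0), (\sum_(i < size s) r (lift ord0 i) * s`_i); split; last by rewrite mulrC.
  by apply/IH; exists (fun i => r (lift ord0 i)).
- move=> [r [y [/IH [r' ->] ->]]].
  exists (fun i : 'I_(size s).+1 => if unlift ord0 i is Some j then r' j else r).
  rewrite big_ord_recl /= unlift_none mulrC; congr (_ + _); apply: eq_bigr => i _.
  by rewrite liftK.
Qed.

Lemma noetherian_span J : noetherian R -> is_ideal J ->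
  exists s, forall x, J x <-> span s x.
Proof. by move=> HN HJ; have [s Hs] := HN J HJ; exists s => x; rewrite Hs span_sumP. Qed.

Lemma ipow_span_noetherian I : noetherian R -> is_ideal I ->
  exists s, forall n x, ipow I n x <-> ipow (span s) n x.
Proof.
move=> HN HI; have [s Hs] := noetherian_span HN HI.
by exists s => n x; split; apply: sub_ipow => y /Hs.
Qed.

Section AscendingChain.
Variable C : nat -> R -> Prop.
Hypothesis C_ideal : forall n, is_ideal (C n).
Hypothesis C_incr : forall n, subideal (C n) (C n.+1).

Lemma chain_leq m n : (m <= n)%N -> subideal (C m) (C n).
Proof.
move=> /subnK <-; elim: (n - m)%N => [//|d IH] x Hx.
by rewrite addSn; apply/C_incr/IH.
Qed.

Lemma noetherian_chain_stationary : noetherian R ->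
  exists c, forall n, subideal (C n) (C c).
Proof.
move=> HN; pose U x := exists n, C n x.
have HU : is_ideal U.
  split; first by exists 0%N; exact: ideal0.
  - move=> x y [m Hx] [n Hy]; exists (maxn m n); apply: idealD => //.
      exact: chain_leq (leq_maxl m n) _ Hx.
    exact: chain_leq (leq_maxr m n) _ Hy.
  - by move=> r x [n Hx]; exists n; apply: idealMl.
have [s Hs] := noetherian_span HN HU.
have [c Hc] : exists c, forall t, t \in s -> C c t.
  have : forall t, t \in s -> U t by move=> t Ht; apply/Hs/span_mem.
  elim: s {Hs} => [|t s IH] Hs; first by exists 0%N.
  have [c Hc] := IH (fun y Hy => Hs y (@mem_behead _ (t :: s) y Hy)).
  have [n Hn] := Hs t (mem_head t s).
  exists (maxn c n) => y; rewrite inE => /orP [/eqP ->|Hy].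
    exact: chain_leq (leq_maxr c n) _ Hn.
  exact: chain_leq (leq_maxl c n) _ (Hc y Hy).
exists c => n x Hx; apply: span_sub (C_ideal c) Hc _ _.
by apply/Hs; exists n.
Qed.

End AscendingChain.

Lemma colon_pow_stationary N t : noetherian R -> is_ideal N ->
  exists c, forall j x, N (t ^+ j * x) -> N (t ^+ c * x).
Proof.
move=> HNo HN; pose C j x := N (t ^+ j * x).
have C_ideal j : is_ideal (C j).
  split; first by rewrite /C mulr0; exact: ideal0.
  - by move=> x y Hx Hy; rewrite /C mulrDr; apply: idealD.
  - by move=> r x Hx; rewrite /C mulrCA; apply: idealMl.
have C_incr j : subideal (C j) (C j.+1).
  by move=> x Hx; rewrite /C exprSr -mulrA mulrCA; apply: idealMl.
have [c Hc] := noetherian_chain_stationary C_ideal C_incr HNo.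
by exists c => j x /Hc.
Qed.

Lemma noetherian_maximal (F : (R -> Prop) -> Prop) J : noetherian R ->
  (forall Q, F Q -> is_ideal Q) -> F J ->
  exists P, F P /\ forall Q, F Q -> subideal P Q -> subideal Q P.
Proof.
move=> HNo F_ideal FJ; apply: NNPP => Hnomax.
have next_ex P : exists Q, F P -> [/\ F Q, subideal P Q & ~ subideal Q P].
  have [FP|nFP] := classic (F P); last by exists P.
  apply: NNPP => Hno; apply: Hnomax; exists P; split => // Q FQ PQ.
  by apply: NNPP => nQP; apply: Hno; exists Q.
pose next P := proj1_sig (constructive_indefinite_description _ (next_ex P)).
have nextP P : F P -> [/\ F (next P), subideal P (next P) & ~ subideal (next P) P].
  exact: proj2_sig (constructive_indefinite_description _ (next_ex P)).
pose C n := iter n next J.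
have FC n : F (C n) by elim: n => [//|n IH]; rewrite /C iterS; case: (nextP _ IH).
have [c Hc] := noetherian_chain_stationary (fun n => F_ideal _ (FC n))
  (fun n => let: And3 _ H _ := nextP _ (FC n) in H) HNo.
by case: (nextP _ (FC c)) => _ _; apply; exact: Hc c.+1.
Qed.

Lemma prime_avoiding_pow J t : noetherian R -> is_ideal J -> (forall k, ~ J (t ^+ k)) ->
  exists p, [/\ is_prime p, subideal J p & ~ p t].
Proof.
move=> HNo HJ HJt.
pose F (Q : R -> Prop) := [/\ is_ideal Q, subideal J Q & forall k, ~ Q (t ^+ k)].
have FJ : F J by split.
have [P [[HP JP Pt] Pmax]] :=
  noetherian_maximal (F := F) HNo (fun Q FQ => let: And3 H _ _ := FQ in H) FJ.
have enlarge z : ~ P z -> exists k, isum P (principal z) (t ^+ k).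
  move=> Pz; apply: NNPP => Hk; apply: Pz.
  have FPz : F (isum P (principal z)).
    split; [exact: isum_ideal HP (principal_ideal z) | | by move=> k Hzk; apply: Hk; exists k].
    by move=> x Jx; exact: isuml (principal_ideal z) (JP x Jx).
  by apply: Pmax FPz (fun x => isuml (principal_ideal z)) _ (isumr HP (principal_id z)).
exists P; split => //; last by move: (Pt 1%N); rewrite expr1.
split => //; first by move: (Pt 0%N); rewrite expr0.
move=> x y Pxy; apply: NNPP => /not_or_and [Px Py].
have [k1 [a1 [b1 [Ha1 [[r1 ->] E1]]]]] := enlarge x Px.
have [k2 [a2 [b2 [Ha2 [[r2 ->] E2]]]]] := enlarge y Py.
apply: (Pt (k1 + k2)%N); rewrite exprD E1 E2.
have -> : (a1 + x * r1) * (a2 + y * r2) = a1 * (a2 + y * r2) + a2 * (x * r1) + x * y * (r1 * r2).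
  by ring.
by apply: (idealD HP); [apply: (idealD HP)|]; apply: idealMr.
Qed.

Lemma ipow_span_cons t s n x : ipow (span (t :: s)) n x ->
  forall a b, n = (a + b)%N -> isum (ipow (span s) a) (principal (t ^+ b)) x.
Proof.
have Hs := span_ideal s.
have HIJ a b : is_ideal (isum (ipow (span s) a) (principal (t ^+ b))).
  exact: isum_ideal (ipow_ideal a Hs) (principal_ideal _).
elim=> {n x} [x|n i j Hi Hj IH|n x y _ IHx _ IHy] a b E.
- by case: a E => [|a] // _; apply: isuml (principal_ideal _) (ipow0 _ _).
- case: a E => [|a] E; first exact: isuml (principal_ideal _) (ipow0 _ _).
  case: b E => [|b] E.
    by apply: isumr (ipow_ideal _ Hs) _; exists (i * j); rewrite expr0 mul1r.
  have [y1 [_ [Hy1 [[z1 ->] E1]]]] := IH a b.+1 ltac:(by move: E; rewrite addSn => [[]]).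
  have [y2 [_ [Hy2 [[z2 ->] E2]]]] := IH a.+1 b ltac:(by move: E; rewrite addSn addnS => [[]]).
  move: Hi => /= [r [i' [Hi' ->]]].
  exists (i' * y1 + t * r * y2), (t ^+ b.+1 * (i' * z1 + r * z2)); split.
    by apply: ipow_add; [apply: ipowS | apply: ipow_mull].
  split; first by exists (i' * z1 + r * z2).
  have -> : (t * r + i') * j = i' * j + t * r * j by ring.
  rewrite {1}E1 E2 exprS; ring.
- by move=> *; apply: idealD (HIJ a b) (IHx a b E) (IHy a b E).
Qed.

Lemma ipow_span_sub s J : is_ideal J -> (forall t, t \in s -> exists k, J (t ^+ k)) ->
  exists M, subideal (ipow (span s) M) J.
Proof.
move=> HJ; elim: s => [|t s IH] Hs.
  by exists 1%N => x /(ipow1 (span_ideal [::])) ->; exact: ideal0.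
have [M HM] := IH (fun t' Ht' => Hs t' (@mem_behead _ (t :: s) t' Ht')).
have [k Hk] := Hs t (mem_head t s).
exists (M + k)%N => x Hx.
have [y [_ [Hy [[z ->] ->]]]] := ipow_span_cons Hx (erefl _).
by apply: idealD => //; [exact: HM | exact: idealMr].
Qed.

(* Induction on the generators: the colon ideals (N + L) : t^j stabilize at some j = c,
   which lets one trade a factor t^(m + c) for t^m. *)
Lemma weak_artin_rees s L N : noetherian R -> is_ideal L -> is_ideal N -> forall m, exists n,
  forall y, N y -> isum (ipow (span s) n) L y -> isum (imul (ipow (span s) m) N) L y.
Proof.
move=> HNo; elim: s L => [|t s IH] L HL HN m.
  exists 1%N => y Ny [p [l [/(ipow1 (span_ideal [::])) -> [Hl ->]]]].
  by exists 0, l; split; [exact: imul0 | rewrite add0r].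
have [c Hc] := colon_pow_stationary t HNo (isum_ideal HN HL).
pose n1 := (m + c)%N.
have [n2 Hn2] := IH (isum L (principal (t ^+ n1))) (isum_ideal HL (principal_ideal _)) HN m.
exists (n2 + n1)%N => y Ny [p [l [Hp [Hl Ey]]]].
have [p' [_ [Hp' [[z ->] Ep]]]] := ipow_span_cons Hp (erefl _).
have [q [_ [Hq [[la [_ [Hla [[x ->] ->]]]] Ey']]]] : isum (imul (ipow (span s) m) N)
    (isum L (principal (t ^+ n1))) y.
  apply: Hn2 => //; exists p', (l + t ^+ n1 * z); do 2!split => //.
    by exists l, (t ^+ n1 * z); do 2!split => //; exists z.
  by rewrite Ey Ep; ring.
have Nq : N q by apply: (imul_sub HN) Hq => a b _ Hb; exact: idealMl.
have [nu [la' [Hnu [Hla' E]]]] : isum N L (t ^+ c * x).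
  apply: (Hc n1); exists (y - q), (- la); split; first exact: idealB.
  by split; [exact: idealN | rewrite Ey'; ring].
exists (q + t ^+ m * nu), (la + t ^+ m * la'); split.
  apply: imulD; first exact: sub_imul (fun w => sub_ipow (@span_cons t s) (x := w)) Hq.
  by apply: imulM => //; apply: ipow_exprn (span_ideal _) (span_mem (mem_head t s)).
split; first by apply: idealD => //; apply: idealMl.
by rewrite Ey' /n1 exprD -mulrA E; ring.
Qed.

Lemma H0_sections_const I c : H0_sections I c 1.
Proof.
split=> [x|p [_ p1 _] _]; first by rewrite mul1r.
exists 1, c; split=> //; exists 1; split=> [x|]; first by rewrite mul1r.
by rewrite /= !mul1r subrr.
Qed.

Lemma H0_sections_conductor I b t : noetherian R -> is_ideal I -> H0_sections I b t ->
  exists M, subideal (ipow I M) (conductor t b).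
Proof.
move=> HNo HI [_ Hsec]; have [s Hs] := noetherian_span HNo HI.
have [M HM] : exists M, subideal (ipow (span s) M) (conductor t b).
  apply: ipow_span_sub (conductor_ideal t b) _ => r Hr; apply: NNPP => Hn.
  have [p [Hp Jp pr]] := prime_avoiding_pow HNo (conductor_ideal t b)
    (fun k Hk => Hn (ex_intro _ k Hk)).
  have [g [c [pg [v [Hv Ev]]]]] := Hsec p Hp (fun Ip => pr (Ip r (proj2 (Hs r) (span_mem Hr)))).
  apply/pg/Jp; exists c.
  by move/eqP: (Hv _ Ev); rewrite /= mulr1 subr_eq0 [c * t]mulrC => /eqP.
by exists M => x Hx; apply/HM/(sub_ipow _ Hx) => y /Hs.
Qed.

Lemma ipow_cancel_nzd I t : noetherian R -> is_ideal I -> nzd t -> forall m, exists n,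
  forall r, ipow I n (r * t) -> ipow I m r.
Proof.
move=> HNo HI Ht m; have [s Hs] := ipow_span_noetherian HNo HI.
have [n Hn] := weak_artin_rees s HNo (span_ideal [::]) (principal_ideal t) m.
exists n => r /Hs Hr.
have [q [_ [Hq [-> E]]]] := Hn (r * t) (ex_intro _ r (mulrC r t)) (isuml (span_ideal _) Hr).
pose tIm q := exists e, ipow (span s) m e /\ q = t * e.
have HtIm : is_ideal tIm.
  have Hm := ipow_ideal m (span_ideal s).
  split; first by exists 0; split; [exact: ideal0 | rewrite mulr0].
  - move=> _ _ [e1 [H1 ->]] [e2 [H2 ->]].
    by exists (e1 + e2); split; [exact: idealD | rewrite mulrDr].
  - by move=> r' _ [e [H ->]]; exists (r' * e); split; [exact: idealMl | rewrite mulrCA].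
have [e [He Eq]] : tIm q.
  apply: (imul_sub HtIm) Hq => i _ Hi [z ->]; exists (i * z); split; last by rewrite mulrCA.
  by rewrite mulrC; apply: ipow_mull (span_ideal s) _.
apply/Hs; suff -> : r = e by [].
apply/eqP; rewrite -subr_eq0; apply/eqP/Ht.
by rewrite mulrBr mulrC E addr0 Eq subrr.
Qed.

Lemma principal_of_conductor I t b M : noetherian R -> is_ideal I ->
  subideal (ipow I M) (conductor t b) ->
  (forall n, isum (ipow I n) (principal t) b) -> principal t b.
Proof.
move=> HNo HI HM Hb; have [s Hs] := ipow_span_noetherian HNo HI.
have Ht := principal_ideal t.
have [n Hn] := weak_artin_rees s HNo Ht (isum_ideal Ht (principal_ideal b)) M.
have [p [l [Hp [Hl E]]]] := Hb n.
have [q [l' [Hq [Hl' Eb]]]] := Hn b (isumr Ht (principal_id b))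
  (ex_intro _ p (ex_intro _ l (conj (proj1 (Hs n p) Hp) (conj Hl E)))).
rewrite Eb; apply: (idealD Ht) _ Hl'.
apply: (imul_sub Ht) Hq => i _ Hi [_ [_ [[x ->] [[y ->] ->]]]].
have [z Hz] : conductor t b (i * y).
  by apply/HM/Hs; rewrite mulrC; exact: ipow_mull (span_ideal s) _.
by exists (i * x + z); rewrite [t * (_ + _)]mulrDr -Hz; ring.
Qed.

End Ideals.

Section Completion.
Variables (R : comNzRingType) (I : R -> Prop).
Hypothesis HI : is_ideal I.
Implicit Types (a b c u : nat -> R) (x t : R).

Lemma Aelt_const x : Aelt I (Aconst x).
Proof. by move=> n; rewrite /Aconst subrr; exact: ipow_zero. Qed.

Lemma Aelt_add a b : Aelt I a -> Aelt I b -> Aelt I (Aadd a b).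
Proof.
move=> Ha Hb n; rewrite /Aadd.
have -> : a n.+1 + b n.+1 - (a n + b n) = (a n.+1 - a n) + (b n.+1 - b n) by ring.
exact: ipow_add.
Qed.

Lemma Aelt_opp a : Aelt I a -> Aelt I (Aopp a).
Proof.
move=> Ha n; rewrite /Aopp -opprD.
exact: idealN (ipow_ideal n HI) (Ha n).
Qed.

Lemma Aelt_mul a b : Aelt I a -> Aelt I b -> Aelt I (Amul a b).
Proof.
move=> Ha Hb n; rewrite /Amul.
have -> : a n.+1 * b n.+1 - a n * b n = a n.+1 * (b n.+1 - b n) + b n * (a n.+1 - a n) by ring.
by apply: ipow_add; apply: ipow_mull.
Qed.

Lemma Aelt_leq a m n : Aelt I a -> (m <= n)%N -> ipow I m (a n - a m).
Proof.
move=> Ha /subnK <-; elim: (n - m)%N => [|d IH]; first by rewrite add0n subrr; exact: ipow_zero.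
have -> : a (d.+1 + m)%N - a m = (a (d + m).+1 - a (d + m)%N) + (a (d + m)%N - a m).
  by rewrite addSn; ring.
by apply: ipow_add IH; apply: ipow_leq (Ha _); rewrite // leq_addl.
Qed.

Lemma Aeq_ext a b : (forall n, a n = b n) -> Aeq I a b.
Proof. by move=> E n; rewrite E subrr; exact: ipow_zero. Qed.

Lemma Aeq_sym a b : Aeq I a b -> Aeq I b a.
Proof. by move=> E n; rewrite -opprB; exact: idealN (ipow_ideal n HI) (E n). Qed.

Lemma Aeq_trans a b c : Aeq I a b -> Aeq I b c -> Aeq I a c.
Proof.
move=> Eab Ebc n; have -> : a n - c n = (a n - b n) + (b n - c n) by ring.
exact: ipow_add.
Qed.

Lemma Aeq_mulr a b c : Aeq I a b -> Aeq I (Amul a c) (Amul b c).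
Proof. by move=> E n; rewrite /Amul -mulrBl mulrC; exact: ipow_mull. Qed.

Lemma Aeq_diff0 a b : Aeq I (Aadd a (Aopp b)) (Aconst 0) <-> Aeq I a b.
Proof. by split=> E n; move: (E n); rewrite /Aadd /Aopp /Aconst subr0. Qed.

Lemma Anzd_cancel u a b : Anzd I u -> Aelt I a -> Aelt I b ->
  Aeq I (Amul u a) (Amul u b) -> Aeq I a b.
Proof.
move=> [_ Hu] Ha Hb E; apply/Aeq_diff0/Hu; first exact: Aelt_add (Aelt_opp Hb).
by move=> n; move: (E n); rewrite /Amul /Aadd /Aopp /Aconst subr0 mulrDr mulrN.
Qed.

Lemma KAeq_cross y z : Aelt I y.1 -> Aelt I y.2 -> Aelt I z.1 -> Aelt I z.2 ->
  KAeq I y z -> Aeq I (Amul y.1 z.2) (Amul z.1 y.2).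
Proof.
move=> Hy1 Hy2 Hz1 Hz2 [w [[_ Hw] E]]; apply/Aeq_diff0/Hw => //.
by apply: Aelt_add; [|apply: Aelt_opp]; apply: Aelt_mul.
Qed.

Lemma KAeq_of_Aeq y z : Aeq I (Amul y.1 z.2) (Amul z.1 y.2) -> KAeq I y z.
Proof.
move=> E; exists (Aconst 1); split.
  by split=> [|v _ Hv n]; [exact: Aelt_const | move: (Hv n); rewrite /Amul /Aconst mul1r].
by move=> n; move: (proj2 (Aeq_diff0 _ _) E n); rewrite /Amul /Aconst mul1r.
Qed.

Lemma KAeq_denom1 a u a' : Aelt I a -> Aelt I u -> Aelt I a' ->
  KAeq I (a, u) (a', Aconst 1) -> Aeq I a (Amul a' u).
Proof.
move=> Ha Hu Ha' E.
have := KAeq_cross (y := (a, u)) (z := (a', Aconst 1)) Ha Hu Ha' (Aelt_const 1) E.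
by apply: Aeq_trans; apply: Aeq_ext => n; rewrite /Amul /Aconst mulr1.
Qed.

Lemma KAeq_denom1_congr a u a' a'' : Aelt I a -> Aelt I u -> Aelt I a' ->
  KAeq I (a, u) (a', Aconst 1) -> Aeq I a' a'' -> KAeq I (a, u) (a'', Aconst 1).
Proof.
move=> Ha Hu Ha' E E'; apply: KAeq_of_Aeq.
have Ea1 : Aeq I (Amul a (Aconst 1)) a by apply: Aeq_ext => n; rewrite /Amul /Aconst mulr1.
exact: Aeq_trans Ea1 (Aeq_trans (KAeq_denom1 Ha Hu Ha' E) (Aeq_mulr u E')).
Qed.

Lemma KAeq_denom1_frac a u a' x t : Aelt I a -> Anzd I u -> Aelt I a' ->
  KAeq I (a, u) (a', Aconst 1) -> KAeq I (a, u) (KA_of_KR x t) ->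
  Aeq I (Amul a' (Aconst t)) (Aconst x).
Proof.
move=> Ha Hu Ha' E1 E2; have Hu' := proj1 Hu.
apply: (Anzd_cancel Hu (Aelt_mul Ha' (Aelt_const t)) (Aelt_const x)).
have Eut : Aeq I (Amul u (Amul a' (Aconst t))) (Amul (Amul a' u) (Aconst t)).
  by apply: Aeq_ext => n; rewrite /Amul mulrCA mulrA.
have Eux : Aeq I (Amul (Aconst x) u) (Amul u (Aconst x)).
  by apply: Aeq_ext => n; rewrite /Amul mulrC.
have Ext := KAeq_cross (y := (a, u)) (z := KA_of_KR x t) Ha Hu' (Aelt_const x) (Aelt_const t) E2.
apply: Aeq_trans Eut (Aeq_trans (Aeq_mulr _ (Aeq_sym (KAeq_denom1 Ha Hu' Ha' E1))) _).
exact: Aeq_trans Ext Eux.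
Qed.

Lemma Aeq_const_of_mul_nzd a t x : noetherian R -> nzd t -> Aelt I a ->
  Aeq I (Amul a (Aconst t)) (Aconst (x * t)) -> Aeq I a (Aconst x).
Proof.
move=> HNo Ht Ha E m; have [n Hn] := ipow_cancel_nzd HNo HI Ht m.
have Hnm : ipow I m (a (n + m)%N - x).
  by apply/Hn/(ipow_leq HI (leq_addr m n)); rewrite mulrBl; exact: E.
have -> : a m - Aconst x m = (a (n + m)%N - x) - (a (n + m)%N - a m) by rewrite /Aconst; ring.
by apply: ipow_sub Hnm _ => //; apply: Aelt_leq; rewrite // leq_addl.
Qed.

End Completion.

Theorem mainTheorem19 (A0 : comNzRingType) (I0 : A0 -> Prop) :
  noetherian A0 -> reduced A0 -> is_ideal I0 ->
  (* Z = V(I0) contains no generic point of Spec A0 *)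
  (forall P, is_minimal_prime P -> ~ subideal I0 P) ->
  (* Z meets every irreducible component V(P) of Spec A0 *)
  (forall P, is_minimal_prime P ->
     exists Q, is_prime Q /\ subideal P Q /\ subideal I0 Q) ->
  forall (a u : nat -> A0), Aelt I0 a -> Anzd I0 u ->
    (exists c : A0, KAeq I0 (a, u) (Aconst c, Aconst 1))
    <->
    ((exists a' : nat -> A0, Aelt I0 a' /\ KAeq I0 (a, u) (a', Aconst 1)) /\
     (exists b s : A0, H0_sections I0 b s /\ KAeq I0 (a, u) (KA_of_KR b s))).
Proof.
(* Reducedness and the two conditions on Z only serve to make K(A0) -> K(A) injective. *)
move=> HNo _ HI _ _ a u Ha Hu.
split=> [[c Ec]|[[a' [Ha' Ea']] [b [s [Hbs Ebs]]]]].
  split; first by exists (Aconst c); split=> //; exact: Aelt_const.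
  by exists c, 1; split=> //; exact: H0_sections_const.
have Eb := KAeq_denom1_frac HI Ha Hu Ha' Ea' Ebs.
have [M HM] := H0_sections_conductor HNo HI Hbs.
have [c Ebc] : principal s b.
  apply: (principal_of_conductor HNo HI HM) => n.
  exists (b - a' n * s), (s * a' n); split; last by split; [exists (a' n) | ring].
  by rewrite -opprB; exact: idealN (ipow_ideal n HI) (Eb n).
have Ea'c : Aeq I0 a' (Aconst c).
  by apply: (Aeq_const_of_mul_nzd HI HNo (proj1 Hbs) Ha'); rewrite mulrC -Ebc.
by exists c; apply: (KAeq_denom1_congr HI Ha (proj1 Hu) Ha' Ea' Ea'c).
Qed.
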